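(* Let $\mathcal{A}$ be a central and essential arrangement in $\mathbb{Q}^l$ as in the context, $\sigma$ a term ordering, and $p$ a prime that is good and $(\sigma,l)$-lucky for $\mathcal{A}$. Then $\chi(\mathcal{A},t)=\chi(\mathcal{A}_p,t)$.
   Context: $\mathcal{A}=\{H_1,\dots,H_n\}$: $n$ distinct linear hyperplanes in $\mathbb{Q}^l$ with $\bigcap H_i=\{0\}$, $H_i=\{\alpha_i=0\}$, $\alpha_i\in\mathbb{Z}[x_1,\dots,x_l]$ a nonzero linear form whose coefficients are not all divisible by any prime, $Q(\mathcal{A})=\prod\alpha_i$. $(\alpha_i)_p$ is the reduction mod $p$; $p$ is good if $\prod(\alpha_i)_p$ is reduced (no $(\alpha_i)_p$ is a scalar multiple of $(\alpha_j)_p$, $i<j$); $\mathcal{A}_p$ is the arrangement in $\mathbb{F}_p^l$ of the hyperplanes $\{(\alpha_i)_p=0\}$. For a term ordering $\sigma$ and nonzero $f\in\mathbb{Z}[x_1,\dots,x_l]$, $\mathrm{LM}_\sigma(f)$ is the leading term times its coefficient $\mathrm{LC}_\sigma(f)$. A minimal strong $\sigma$-Gröbner basis of an ideal $I\subseteq\mathbb{Z}[x_1,\dots,x_l]$ is a finite generating set $G$ of nonzero elements of $I$ such that every nonzero $f\in I$ has $\mathrm{LM}_\sigma(f)$ divisible by some $\mathrm{LM}_\sigma(g)$, $g\in G$, and no $\mathrm{LM}_\sigma(g)$ divides $\mathrm{LM}_\sigma(g')$ for distinct $g,g'\in G$; its set of leading coefficients is independent of the choice. $p$ is $\sigma$-lucky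 for $I$ if it divides none of these leading coefficients; $p$ is $(\sigma,l)$-lucky for $\mathcal{A}$ if it is $\sigma$-lucky for every ideal $\langle\alpha_{i_1},\dots,\alpha_{i_l}\rangle\subseteq\mathbb{Z}[x_1,\dots,x_l]$ with $i_1<\dots<i_l$ and $\operatorname{codim}(H_{i_1}\cap\dots\cap H_{i_l})=l$. For an arrangement $\mathcal{B}$ in $K^l$ with intersection lattice $L(\mathcal{B})$ (all intersections of subfamilies, the empty one being $K^l$, ordered by reverse inclusion), the Möbius function is $\mu(K^l)=1$, $\mu(X)=-\sum_{Y<X}\mu(Y)$, and $\chi(\mathcal{B},t)=\sum_{X\in L(\mathcal{B})}\mu(X)t^{\dim X}$. *)

From HB Require Import structures.
From mathcomp Require Import all_boot all_order all_algebra.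
From mathcomp Require Import mpoly.

Set Implicit Arguments.
Unset Strict Implicit.
Unset Printing Implicit Defensive.

Import Order.TTheory GRing.Theory Num.Theory.
Local Open Scope ring_scope.

Section Groebner.
Variable l : nat.

Definition term_order (le : rel 'X_{1..l}) : Prop :=
  [/\ reflexive le, antisymmetric le, transitive le, total le &
     [/\ (forall m1 m2 m, le m1 m2 -> le (m1 + m)%MM (m2 + m)%MM) &
      (forall m, le 0%MM m)]].

(* The sigma-leading monomial of f: the le-largest monomial of the support
   (meaningful for f <> 0 and le a term ordering). *)
Definition lmon (le : rel 'X_{1..l}) (f : {mpoly int[l]}) : 'X_{1..l} :=
  foldr (fun m acc => if le acc m then m else acc) 0%MM (msupp f).

Definition lcoef (le : rel 'X_{1..l}) (f : {mpoly int[l]}) : int :=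
  f@_(lmon le f).

Definition term_dvd (le : rel 'X_{1..l}) (g f : {mpoly int[l]}) : bool :=
  (lcoef le g %| lcoef le f)%Z && (lmon le g <= lmon le f)%MM.

Definition in_ideal (gens : seq {mpoly int[l]}) (f : {mpoly int[l]}) : Prop :=
  exists c : seq {mpoly int[l]}, f = \sum_(i < size gens) c`_i * gens`_i.

Definition min_strong_GB (le : rel 'X_{1..l}) (I G : seq {mpoly int[l]}) : Prop :=
  [/\ uniq G,
      (forall g, g \in G -> g != 0) &
     [/\
      (forall g, g \in G -> in_ideal I g),
      (forall f, in_ideal I f -> in_ideal G f),
      (forall f, in_ideal I f -> f != 0 -> exists2 g, g \in G & term_dvd le g f) &
      (forall g g', g \in G -> g' \in G -> g != g' -> ~~ term_dvd le g g')]].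

(* p is sigma-lucky for the ideal generated by I: p divides none of the
   leading coefficients of a minimal strong sigma-Groebner basis (this set
   is independent of the choice of basis). *)
Definition sigma_lucky (le : rel 'X_{1..l}) (I : seq {mpoly int[l]}) (p : nat) : Prop :=
  exists2 G, min_strong_GB le I G &
             forall g, g \in G -> ~~ (p%:Z %| lcoef le g)%Z.

Definition linpoly (a : 'rV[int]_l) : {mpoly int[l]} :=
  \sum_(j < l) (a 0 j)%:MP * 'X_j.

End Groebner.

Section Arrangement.
Variables (K : fieldType) (l n : nat) (a : 'I_n -> 'rV[K]_l).
(* hyperplane H_i = { x in K^l | sum_j a i 0 j * x_j = 0 } *)

Definition formsmx (T0 : {set 'I_n}) : 'M[K]_(l, n) :=
  \matrix_(j < l, i < n) (if i \in T0 then a i 0 j else 0).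

(* the intersection of the H_i, i in S, as a canonical row space of K^l
   (S = set0 gives the whole space K^l) *)
Definition flat (T0 : {set 'I_n}) : 'M[K]_l := <<kermx (formsmx T0)>>%MS.

Definition lattice : seq 'M[K]_l :=
  undup [seq flat T0 | T0 <- enum {set 'I_n}].

(* Moebius function: mu(K^l) = 1, mu(X) = - sum_{Y < X} mu(Y), where
   Y < X in L(A) iff X is strictly contained in Y. Chains have length at
   most l, so l.+1 recursion steps suffice. *)
Fixpoint mobius_rec (k : nat) (X : 'M[K]_l) : int :=
  if k is k'.+1 then
    if X == flat set0 then 1
    else - \sum_(Y <- lattice | (X < Y)%MS) mobius_rec k' Y
  else 0.

Definition mobius (X : 'M[K]_l) : int := mobius_rec l.+1 X.

Definition charpoly_arr : {poly int} :=
  \sum_(X <- lattice) (mobius X)%:P * 'X^(\rank X).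

End Arrangement.

Definition arrQ l n (alpha : 'I_n -> 'rV[int]_l) : 'I_n -> 'rV[rat]_l :=
  fun i => map_mx (fun z : int => z%:~R : rat) (alpha i).

Definition arrP (p : nat) l n (alpha : 'I_n -> 'rV[int]_l) : 'I_n -> 'rV['F_p]_l :=
  fun i => map_mx (fun z : int => z%:~R : 'F_p) (alpha i).

From HB Require Import structures.
From mathcomp Require Import all_boot all_order all_algebra.
From mathcomp Require Import mpoly.

(* The characteristic polynomial is computed from the intersection lattice and the
   dimensions of its flats, and all of these are determined by the rank function
   T |-> rank (alpha_i, i in T) of the forms, hence by the l-subsets that are bases.
   An l-subset B is a basis over F_p iff det(alpha_B) is nonzero mod p, so every
   F_p-basis is a Q-basis. Conversely, let B be a Q-basis and d = det(alpha_B) <> 0;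
   the adjugate shows that d x_k lies in the ideal of the forms of B for every k.
   If these forms had a nonzero common zero w mod p, take x_k minimal for sigma among
   the variables with w_k <> 0 and an element g of the Groebner basis whose leading
   term divides d x_k. Its leading monomial is 1 or x_k, every other monomial of g
   below x_k vanishes at w, and so g(w) is LC(g) or LC(g) w_k modulo p: nonzero
   since p is lucky, although g lies in the ideal. *)

Set Implicit Arguments.
Unset Strict Implicit.
Unset Printing Implicit Defensive.

Import Order.TTheory GRing.Theory Num.Theory.
Local Open Scope ring_scope.

Definition seqmx {R : nmodType} (m l : nat) (s : seq 'rV[R]_l) : 'M[R]_(m, l) :=
  \matrix_(i < m) s`_i.

Lemma map_seqmx (R S : nmodType) (f : {additive R -> S}) m l (s : seq 'rV[R]_l) :
  map_mx f (seqmx m s) = seqmx m [seq map_mx f c | c <- s].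
Proof.
apply/matrixP => i j; rewrite !mxE; have [lt_i | ge_i] := ltnP i (size s).
  by rewrite (nth_map 0) // mxE.
by rewrite !nth_default ?size_map // !mxE raddf0.
Qed.

Section ArrangementRank.
Variables (K : fieldType) (l n : nat) (a : 'I_n -> 'rV[K]_l).
Implicit Types A B I J T : {set 'I_n}.

Definition rowsmx (T : {set 'I_n}) : 'M[K]_(n, l) :=
  \matrix_(i < n, j < l) (if i \in T then a i 0 j else 0).

Definition rk (T : {set 'I_n}) : nat := \rank (rowsmx T).

Definition indep (T : {set 'I_n}) : bool := rk T == #|T|.

Lemma rk_leq T : (rk T <= l)%N.
Proof. exact: rank_leq_col. Qed.

Lemma row_rowsmx T i : row i (rowsmx T) = if i \in T then a i else 0.
Proof.
by apply/rowP => j; rewrite !mxE; case: ifP; rewrite ?mxE.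
Qed.

Lemma sub_rowsmx T i : i \in T -> (a i <= rowsmx T)%MS.
Proof. by move=> iT; have := row_sub i (rowsmx T); rewrite row_rowsmx iT. Qed.

Lemma rowsmxS A B : A \subset B -> (rowsmx A <= rowsmx B)%MS.
Proof.
move=> sAB; apply/row_subP => i; rewrite row_rowsmx.
by case: ifP => [iA | _]; [apply/sub_rowsmx/(subsetP sAB) | apply: sub0mx].
Qed.

Lemma rkS A B : A \subset B -> (rk A <= rk B)%N.
Proof. by move/rowsmxS/mxrankS. Qed.

Lemma rkU A B : (rk (A :|: B) <= rk A + rk B)%N.
Proof.
apply: leq_trans (mxrank_adds_leqif (rowsmx A) (rowsmx B)).1.
apply/mxrankS/row_subP => i; rewrite row_rowsmx inE.
case: ifP => [/orP[iA | iB] | _]; last exact: sub0mx.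
  exact/(submx_trans (sub_rowsmx iA))/addsmxSl.
exact/(submx_trans (sub_rowsmx iB))/addsmxSr.
Qed.

Lemma eqmx_rowsmx T : (rowsmx T :=: seqmx #|T| [seq a i | i <- enum T])%MS.
Proof.
apply/eqmxP/andP; split; apply/row_subP => i; last first.
  rewrite rowK; have /mapP[j jT ->] : [seq a i | i <- enum T]`_i \in map a (enum T).
    by apply: mem_nth; rewrite size_map -cardE.
  by apply: sub_rowsmx; rewrite -mem_enum.
rewrite row_rowsmx; case: ifP => iT; last exact: sub0mx.
have lt_i : (index i (enum T) < #|T|)%N by rewrite cardE index_mem mem_enum.
suff -> : a i = row (Ordinal lt_i) (seqmx #|T| [seq a i | i <- enum T]) by apply: row_sub.
by rewrite rowK (nth_map i) ?nth_index ?mem_enum // -cardE.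
Qed.

Lemma rk_seqmx T : rk T = \rank (seqmx #|T| [seq a i | i <- enum T]).
Proof. by rewrite /rk (eqmx_rowsmx T). Qed.

Lemma rk_card T : (rk T <= #|T|)%N.
Proof. by rewrite rk_seqmx rank_leq_row. Qed.

Lemma indep0 : indep set0.
Proof. by rewrite /indep cards0 -leqn0 -(cards0 'I_n) rk_card. Qed.

Lemma indepS A B : A \subset B -> indep B -> indep A.
Proof.
move=> sAB /eqP rkB; rewrite /indep eqn_leq rk_card /=.
have eB : A :|: (B :\: A) = B by rewrite setDE setUIr setUCr setIT (setUidPr sAB).
have le_B : (#|B| <= rk A + (#|B| - #|A|))%N.
  rewrite -{1}rkB -{1}eB -cardsDS //.
  exact: leq_trans (rkU _ _) (leq_add (leqnn _) (rk_card _)).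
by rewrite -(leq_add2r (#|B| - #|A|)) subnKC ?subset_leq_card.
Qed.

Lemma sub_rowsmx_rk I j : rk (j |: I) = rk I -> (a j <= rowsmx I)%MS.
Proof.
move=> rk_jI; have sI := rowsmxS (subsetUr [set j] I).
have sjI : (rowsmx (j |: I) <= rowsmx I)%MS by rewrite -(mxrank_leqif_sup sI).2; apply/eqP/esym.
exact: submx_trans (sub_rowsmx (setU11 j I)) sjI.
Qed.

Lemma rk_span I T :
  (forall j, j \in T -> j \notin I -> rk (j |: I) = rk I) -> (rk T <= rk I)%N.
Proof.
move=> rk_T; apply/mxrankS/row_subP => j; rewrite row_rowsmx.
case: ifP => jT; last exact: sub0mx.
by have [/sub_rowsmx | /(rk_T j jT)/sub_rowsmx_rk] := boolP (j \in I).
Qed.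

Lemma indep_extend I T : I \subset T -> indep I ->
  exists J, [/\ I \subset J, J \subset T, indep J & rk J = rk T].
Proof.
have [k] := ubnP #|T :\: I|; elim: k I => // k IH I lt_k sIT iI.
have [rkI | neI] := eqVneq (rk I) (rk T); first by exists I.
have /exists_inP[j /setDP[jT jI] rk_jI] : [exists j in T :\: I, rk (j |: I) != rk I].
  apply: contraR neI => /exists_inPn rk_T; rewrite eqn_leq rkS //=.
  by apply: rk_span => j jT jI; apply/eqP/negbNE/rk_T/setDP.
have rk_jI1 : rk (j |: I) = (rk I).+1.
  apply/eqP; rewrite eqn_leq ltn_neqAle eq_sym rk_jI rkS ?subsetUr //=.
  by rewrite -add1n -(cards1 j) (leq_trans (rkU _ _)) ?leq_add2r ?rk_card.
have iJ : indep (j |: I) by rewrite /indep cardsU1 jI rk_jI1 (eqP iI).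
have sJT : j |: I \subset T by rewrite subUset sub1set jT.
have [|J [sJ ? ? ?]] := IH (j |: I) _ sJT iJ.
  rewrite -ltnS (leq_trans _ lt_k) // ltnS proper_card //.
  by apply/properP; split; [rewrite setDS ?subsetUr | exists j; rewrite !inE ?eqxx ?jT ?jI].
by exists J; split=> //; apply: subset_trans sJ; apply: subsetUr.
Qed.

Lemma mxrank_flat T : \rank (flat a T) = (l - rk T)%N.
Proof.
rewrite /flat genmxE mxrank_ker -mxrank_tr; congr (l - \rank _)%N.
by apply/matrixP => i j; rewrite !mxE.
Qed.

Lemma sub_flat m (M : 'M[K]_(m, l)) T :
  (M <= flat a T)%MS = [forall i in T, M *m (a i)^T == 0].
Proof.
have MF r i : (M *m formsmx a T) r i = if i \in T then (M *m (a i)^T) r 0 else 0.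
  rewrite !mxE; case: ifP => iT; last by rewrite big1 // => j _; rewrite !mxE iT mulr0.
  by apply: eq_bigr => j _; rewrite !mxE iT.
rewrite /flat genmxE sub_kermx; apply/eqP/forall_inP => [M0 i iT | M0].
  apply/eqP/matrixP => r z; rewrite ord1 [RHS]mxE.
  by have := MF r i; rewrite iT M0 mxE.
apply/matrixP => r i; rewrite MF [RHS]mxE; case: ifP => // iT.
by rewrite (eqP (M0 i iT)) mxE.
Qed.

Lemma flatS A B : A \subset B -> (flat a B <= flat a A)%MS.
Proof.
move=> sAB; rewrite sub_flat; apply/forall_inP => i iA.
by move: (submx_refl (flat a B)); rewrite sub_flat => /forall_inP; apply; apply: (subsetP sAB).
Qed.

Lemma sub_flatU m (M : 'M[K]_(m, l)) A B :
  (M <= flat a (A :|: B))%MS = (M <= flat a A)%MS && (M <= flat a B)%MS.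
Proof.
rewrite !sub_flat; apply/forall_inP/andP => [M0 | [/forall_inP M0 /forall_inP M1] i].
  by split; apply/forall_inP => i iX; apply: M0; rewrite inE iX ?orbT.
by rewrite inE => /orP[]; [apply: M0 | apply: M1].
Qed.

Lemma sub_flat_rk T0 T1 : (flat a T0 <= flat a T1)%MS = (rk (T0 :|: T1) == rk T0).
Proof.
rewrite -[LHS]andTb -(submx_refl (flat a T0)) -sub_flatU.
rewrite -(mxrank_leqif_sup (flatS (subsetUl T0 T1))).2 !mxrank_flat.
by rewrite eqn_sub2lE ?rk_leq.
Qed.

Lemma eq_flatE T0 T1 :
  (flat a T0 == flat a T1) = (flat a T0 <= flat a T1)%MS && (flat a T1 <= flat a T0)%MS.
Proof. by rewrite /flat !genmxE; apply: sameP eqP genmxP. Qed.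

End ArrangementRank.

Section SameBases.
Variables (K1 K2 : fieldType) (l n : nat).
Variables (a1 : 'I_n -> 'rV[K1]_l) (a2 : 'I_n -> 'rV[K2]_l).
Implicit Types B I J T : {set 'I_n}.

Lemma rk_leq_of_indep T :
  (forall I, indep a1 I -> indep a2 I) -> (rk a1 T <= rk a2 T)%N.
Proof.
move=> indep12; have [J [_ sJT iJ <-]] := indep_extend (sub0set T) (indep0 a1).
by rewrite (eqP iJ) -(eqP (indep12 J iJ)) rkS.
Qed.

Lemma indep_of_bases : rk a1 setT = l ->
  (forall B, #|B| = l -> indep a1 B -> indep a2 B) ->
  forall I, indep a1 I -> indep a2 I.
Proof.
move=> rk1 bases12 I iI; have [J [sIJ _ iJ rkJ]] := indep_extend (subsetT I) iI.
by apply: indepS sIJ (bases12 J _ iJ); rewrite -(eqP iJ) rkJ.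
Qed.

End SameBases.

Lemma eq_rk_of_bases (K1 K2 : fieldType) (l n : nat)
    (a1 : 'I_n -> 'rV[K1]_l) (a2 : 'I_n -> 'rV[K2]_l) :
  rk a1 setT = l -> (forall B : {set 'I_n}, #|B| = l -> indep a1 B = indep a2 B) ->
  forall T, rk a1 T = rk a2 T.
Proof.
move=> rk1 bases12.
have indep12 : forall I, indep a1 I -> indep a2 I.
  by apply: indep_of_bases => // B cB; rewrite bases12.
have rk2 : rk a2 setT = l.
  by apply/eqP; rewrite eqn_leq rk_leq -{1}rk1 rk_leq_of_indep.
have indep21 : forall I, indep a2 I -> indep a1 I.
  by apply: indep_of_bases => // B cB; rewrite bases12.
by move=> T; apply/eqP; rewrite eqn_leq !rk_leq_of_indep.
Qed.

Section Closure.
Variables (K : fieldType) (l n : nat) (a : 'I_n -> 'rV[K]_l).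
Implicit Types T : {set 'I_n}.

Definition cl T : {set 'I_n} := [set i | (flat a T <= flat a [set i])%MS].

Lemma flat_cl T : flat a (cl T) = flat a T.
Proof.
apply/eqP; rewrite eq_flatE; apply/andP; split.
  by apply: flatS; apply/subsetP => i iT; rewrite inE flatS ?sub1set.
rewrite sub_flat; apply/forall_inP => i; rewrite inE sub_flat => /forall_inP; apply.
exact: set11.
Qed.

Lemma eq_cl T0 T1 : flat a T0 = flat a T1 -> cl T0 = cl T1.
Proof. by move=> eqT; apply/setP => i; rewrite !inE eqT. Qed.

Lemma cl_id T : cl (cl T) = cl T.
Proof. exact/eq_cl/flat_cl. Qed.

Definition closed_sets : seq {set 'I_n} := [seq T <- enum {set 'I_n} | cl T == T].

Lemma perm_lattice : perm_eq (lattice a) [seq flat a T | T <- closed_sets].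
Proof.
apply: uniq_perm; first exact: undup_uniq.
  rewrite map_inj_in_uniq => [|T0 T1]; first by rewrite filter_uniq // enum_uniq.
  by rewrite !mem_filter => /andP[/eqP clT0 _] /andP[/eqP clT1 _] /eq_cl; rewrite clT0 clT1.
move=> X; rewrite mem_undup; apply/mapP/mapP => [[T _ ->] | [T _ ->]].
  by exists (cl T); rewrite ?flat_cl // mem_filter cl_id eqxx mem_enum.
by exists T; rewrite ?mem_enum.
Qed.

End Closure.

Section Transfer.
Variables (K1 K2 : fieldType) (l n : nat).
Variables (a1 : 'I_n -> 'rV[K1]_l) (a2 : 'I_n -> 'rV[K2]_l).
Hypothesis eq_rk : forall T, rk a1 T = rk a2 T.
Implicit Types T : {set 'I_n}.

Lemma submx_flat_transfer T0 T1 :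
  (flat a1 T0 <= flat a1 T1)%MS = (flat a2 T0 <= flat a2 T1)%MS.
Proof. by rewrite !sub_flat_rk !eq_rk. Qed.

Lemma eq_flat_transfer T0 T1 : (flat a1 T0 == flat a1 T1) = (flat a2 T0 == flat a2 T1).
Proof. by rewrite !eq_flatE !submx_flat_transfer. Qed.

Lemma ltmx_flat_transfer T0 T1 :
  (flat a1 T0 < flat a1 T1)%MS = (flat a2 T0 < flat a2 T1)%MS.
Proof. by rewrite /ltmx !submx_flat_transfer. Qed.

Lemma closed_sets_transfer : closed_sets a1 = closed_sets a2.
Proof.
apply: eq_filter => T; congr (_ == _); apply/setP => i.
by rewrite !inE submx_flat_transfer.
Qed.

Lemma mobius_rec_transfer k T : mobius_rec a1 k (flat a1 T) = mobius_rec a2 k (flat a2 T).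
Proof.
elim: k T => [|k IHk] T //=; rewrite eq_flat_transfer; case: ifP => // _.
rewrite (perm_big _ (perm_lattice a1)) (perm_big _ (perm_lattice a2)) !big_map.
rewrite closed_sets_transfer; congr (- _).
by apply: eq_big => [T'|T' _]; [apply: ltmx_flat_transfer | apply: IHk].
Qed.

Lemma charpoly_arr_transfer : charpoly_arr a1 = charpoly_arr a2.
Proof.
rewrite /charpoly_arr (perm_big _ (perm_lattice a1)) (perm_big _ (perm_lattice a2)).
rewrite !big_map closed_sets_transfer; apply: eq_bigr => T _.
by rewrite !mxrank_flat eq_rk /mobius mobius_rec_transfer.
Qed.

End Transfer.

Lemma indep_det (K : fieldType) (l n : nat) (alpha : 'I_n -> 'rV[int]_l) (B : {set 'I_n}) :
  #|B| = l -> indep (fun i => map_mx intr (alpha i) : 'rV[K]_l) B =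
  ((\det (seqmx l [seq alpha i | i <- enum B]))%:~R != 0 :> K).
Proof.
move=> cB; rewrite /indep rk_seqmx (map_comp (map_mx intr) alpha) -map_seqmx cB.
by rewrite -[_ == l]/(row_free _) row_free_unit unitmxE unitfE det_map_mx.
Qed.

Lemma ex_minimal (T : eqType) (r : rel T) (s : seq T) :
  reflexive r -> transitive r -> total r -> s != [::] ->
  exists2 x, x \in s & {in s, forall y, r x y}.
Proof.
move=> r_refl r_trans r_total ne_s.
have : sort r s != [::] by rewrite -size_eq0 size_sort size_eq0.
case def_s: (sort r s) => [|x s'] // _.
have mem_s y : (y \in s) = (y \in x :: s') by rewrite -def_s mem_sort.
have := sort_sorted r_total s; rewrite def_s => /(order_path_min r_trans) min_x.
exists x => [|y]; first by rewrite mem_s mem_head.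
by rewrite mem_s inE => /predU1P[-> | /(allP min_x)].
Qed.

Lemma mnm_pos l (m : 'X_{1..l}) : m != 0%MM -> exists j, (0 < m j)%N.
Proof.
rewrite -mdeg_eq0 mdegE sum_nat_eq0 => /forallPn[j].
by rewrite -lt0n; exists j.
Qed.

Lemma lem_mnm1 l (m : 'X_{1..l}) k : (m <= U_(k))%MM -> m = 0%MM \/ m = U_(k)%MM.
Proof.
move=> /mnm_lepP le_mk.
have m_j j : k != j -> m j = 0%N.
  by move=> ne_kj; apply/eqP; rewrite -leqn0; have := le_mk j; rewrite mnm1E (negbTE ne_kj).
have [mk0 | mk_pos] := posnP (m k); [left | right]; apply/mnmP => j;
  rewrite ?mnm0E ?mnm1E; have [<- // | /m_j -> //] := eqVneq k j.
by apply/eqP; rewrite eqn_leq mk_pos andbT; have := le_mk k; rewrite mnm1E eqxx.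
Qed.

Lemma mnm1_lem l (j : 'I_l) (m : 'X_{1..l}) : (U_(j) <= m)%MM = (0 < m j)%N.
Proof.
apply/mnm_lepP/idP => [/(_ j) | m_j i]; rewrite mnm1E ?eqxx //.
by case: eqP => // <-.
Qed.

Section IntegerEvaluation.
Variables (l : nat) (S : comNzRingType).
Implicit Types (w : 'I_l -> S) (g : {mpoly int[l]}).

Definition mevalz w g : S := mmap intr w g.

Lemma mevalzE w g : mevalz w g = \sum_(m <- msupp g) (g@_m)%:~R * mmap1 w m.
Proof. by []. Qed.

Lemma mevalz_linpoly w (c : 'rV[int]_l) :
  mevalz w (linpoly c) = \sum_j (c 0 j)%:~R * w j.
Proof.
rewrite /mevalz /linpoly raddf_sum /=; apply: eq_bigr => j _.
by rewrite rmorphM /= mmapC mmapX mmap1U.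
Qed.

Lemma mevalz_ideal w gens g :
  {in gens, forall q, mevalz w q = 0} -> in_ideal gens g -> mevalz w g = 0.
Proof.
move=> gens0 [c ->]; rewrite /mevalz raddf_sum /= big1 // => i _.
by rewrite rmorphM /= [mmap _ _ gens`_i]gens0 ?mulr0 ?mem_nth.
Qed.

Lemma sum_msupp_pred1 g m0 (F : 'X_{1..l} -> S) :
  {in msupp g, forall m, m != m0 -> F m = 0} ->
  \sum_(m <- msupp g) (g@_m)%:~R * F m = (g@_m0)%:~R * F m0.
Proof.
move=> F0; rewrite (bigID (pred1 m0)) /= [X in _ + X]big1_seq ?addr0; last first.
  by move=> m /andP[ne_m /F0 ->]; rewrite ?mulr0.
have [m0g | m0g] := boolP (m0 \in msupp g).
  by rewrite -big_filter filter_pred1_uniq ?msupp_uniq // big_seq1.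
move: (m0g); rewrite mcoeff_msupp negbK => /eqP ->; rewrite mulr0z mul0r.
by rewrite big1_seq // => m /andP[/eqP -> m0g']; rewrite m0g' in m0g.
Qed.

Lemma mmap1_eq0 w (m : 'X_{1..l}) j : (0 < m j)%N -> w j = 0 -> mmap1 w m = 0.
Proof. by move=> m_j w_j; rewrite /mmap1 (bigD1 j) //= w_j expr0n eqn0Ngt m_j mul0r. Qed.

Lemma mevalz0 g : mevalz (fun=> 0) g = (g@_0%MM)%:~R.
Proof.
rewrite mevalzE (@sum_msupp_pred1 _ 0%MM) ?mmap11 ?mulr1 // => m _ /mnm_pos[j m_j].
exact: mmap1_eq0 m_j _.
Qed.

End IntegerEvaluation.

Section TermOrder.
Variables (l : nat) (le : rel 'X_{1..l}).
Hypothesis le_term_order : term_order le.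

Lemma le_of_lem m1 m2 : (m1 <= m2)%MM -> le m1 m2.
Proof.
case: le_term_order => _ _ _ _ [le_add le0] /submK <-.
by rewrite -{1}(add0m m1) le_add.
Qed.

Lemma lmon_max (g : {mpoly int[l]}) m : m \in msupp g -> le m (lmon le g).
Proof.
have [le_refl _ le_trans le_total _] := le_term_order.
rewrite /lmon; elim: (msupp g) => // m' s IHs; rewrite inE /=.
set acc := foldr _ _ s; case: ifP => [le_acc | /negbT nle_acc].
  by case/predU1P => [-> // | /IHs /le_trans]; apply.
case/predU1P => [-> | /IHs //]; by case/orP: (le_total acc m') nle_acc => ->.
Qed.

Lemma lmon_scaleX (d : int) m : d != 0 -> lmon le (d *: 'X_[m]) = m.
Proof.
move=> d0; rewrite /lmon msuppMCX //=.
by case: le_term_order => _ _ _ _ [_ ->].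
Qed.

Lemma mevalz_lmonU (S : comNzRingType) (g : {mpoly int[l]}) (w : 'I_l -> S) k :
  lmon le g = U_(k)%MM -> (forall j, w j != 0 -> le U_(k)%MM U_(j)%MM) ->
  mevalz w g = (g@_0%MM)%:~R + (g@_U_(k)%MM)%:~R * w k.
Proof.
move=> lmg min_k; have [_ le_anti le_trans _ _] := le_term_order.
have le_mk m : m \in msupp g -> le m U_(k)%MM by rewrite -lmg; apply: lmon_max.
have mmap1_w m : m \in msupp g ->
    mmap1 w m = mmap1 (fun=> 0) m + (m == U_(k)%MM)%:R * w k.
  move=> mg; have [-> | m0] := eqVneq m 0%MM.
    by rewrite !mmap11 eq_sym mnm1_eq0 mul0r addr0.
  have [-> | ne_mk] := eqVneq m U_(k)%MM; first by rewrite !mmap1U mul1r add0r.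
  have [j m_j] := mnm_pos m0.
  have w_j : w j = 0.
    apply/eqP; apply: contraNT ne_mk => /min_k le_kj; apply/eqP/le_anti.
    by rewrite le_mk //= (le_trans _ _ _ le_kj) // le_of_lem // mnm1_lem.
  by rewrite (mmap1_eq0 m_j w_j) (mmap1_eq0 (w := fun=> 0) m_j) // mul0r addr0.
rewrite mevalzE; under eq_big_seq => m mg do rewrite mmap1_w // mulrDr.
rewrite big_split /= -mevalzE mevalz0; congr (_ + _).
rewrite (sum_msupp_pred1 (m0 := U_(k)%MM)) ?eqxx ?mul1r // => m _ /negbTE ->.
by rewrite mul0r.
Qed.

End TermOrder.

Section LinearForms.
Variable l : nat.
Implicit Types (c : 'rV[int]_l) (s : seq 'rV[int]_l).

Lemma linpoly_coef0 c : (linpoly c)@_0%MM = 0.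
Proof.
rewrite /linpoly raddf_sum /= big1 // => j _.
by rewrite mcoeffCM mcoeffX mnm1_eq0 mulr0.
Qed.

Lemma in_ideal_det_X s k :
  size s = l -> in_ideal [seq linpoly c | c <- s] (\det (seqmx l s) *: 'X_k).
Proof.
move=> sz; set M := seqmx l s.
exists (mkseq (fun i => (\adj M k (insubd k i))%:MP) l).
rewrite -(big_mkord xpredT (fun i => _`_i * _`_i)) size_map sz big_mkord; apply/esym.
transitivity (\sum_(i < l) \sum_(j < l) (\adj M k i * M i j)%:MP * 'X_j).
  apply: eq_bigr => i _; rewrite nth_mkseq // (nth_map 0) ?sz //.
  have -> : insubd k i = i by apply: val_inj; rewrite val_insubd ltn_ord.
  by rewrite /linpoly mulr_sumr; apply: eq_bigr => j _; rewrite rmorphM mulrA [M i j]mxE.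
have adjM j : \sum_i \adj M k i * M i j = \det M *+ (k == j).
  by have /matrixP/(_ k j) := mul_adj_mx M; rewrite !mxE.
rewrite exchange_big /=; under eq_bigr => j _ do rewrite -mulr_suml -rmorph_sum adjM.
rewrite (bigD1 k) //= eqxx mul_mpolyC big1 ?addr0 // => j ne_jk.
by rewrite eq_sym (negbTE ne_jk) mulr0n rmorph0 mul0r.
Qed.

End LinearForms.

Section LuckyPrime.
Variables (l p : nat) (le : rel 'X_{1..l}).
Hypotheses (le_term_order : term_order le) (p_prime : prime p).

Lemma lucky_common_zero (gens : seq {mpoly int[l]}) (w : 'I_l -> 'F_p) :
  sigma_lucky le gens p -> {in gens, forall q, q@_0%MM = 0} ->
  (forall k, exists2 d : int, d != 0 & in_ideal gens (d *: 'X_k)) ->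
  {in gens, forall q, mevalz w q = 0} -> forall j, w j = 0.
Proof.
move=> [G [_ _ [inG _ GB _]] luckG] gens0 dX_in w0 j; apply/eqP/negPn/negP => wj.
have [le_refl _ le_trans le_total _] := le_term_order.
set supp := [seq i <- enum 'I_l | w i != 0].
have [k] : exists2 k, k \in supp & {in supp, forall i, le U_(k)%MM U_(i)%MM}.
  apply: (ex_minimal (r := [rel i j | le U_(i)%MM U_(j)%MM])) => // [i|i1 i2 i3|i1 i2|].
  - exact: le_refl.
  - exact: le_trans.
  - exact: le_total.
  - have j_supp : j \in supp by rewrite mem_filter wj mem_enum.
    by apply/eqP => supp0; rewrite supp0 in j_supp.
rewrite mem_filter mem_enum andbT => wk min_k.
have {}min_k i : w i != 0 -> le U_(k)%MM U_(i)%MM.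
  by move=> wi; apply: min_k; rewrite mem_filter wi mem_enum.
have [d d0 dX_k] := dX_in k.
have dX0 : d *: 'X_k != 0.
  apply: contraNneq d0 => /(congr1 (mcoeff U_(k)%MM)).
  by rewrite mcoeffZ mcoeffX eqxx mulr1 mcoeff0 => ->.
have [g gG] := GB _ dX_k dX0; rewrite /term_dvd lmon_scaleX // => /andP[_ /lem_mnm1 lmg].
have g_0 : (g@_0%MM)%:~R = 0 :> 'F_p.
  rewrite -mevalz0; apply: mevalz_ideal (inG g gG) => q /gens0 q0.
  by rewrite mevalz0 q0.
have lcg : (lcoef le g)%:~R != 0 :> 'F_p by rewrite -(dvdz_pcharf (pchar_Fp p_prime)) luckG.
case: lmg => lmg; rewrite /lcoef lmg in lcg; first by rewrite g_0 eqxx in lcg.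
have := mevalz_ideal w0 (inG g gG); rewrite (mevalz_lmonU le_term_order lmg min_k) g_0 add0r.
by move/eqP; rewrite mulf_eq0 (negbTE lcg) (negbTE wk).
Qed.

Lemma det_modp_neq0 (s : seq 'rV[int]_l) :
  size s = l -> \det (seqmx l s) != 0 -> sigma_lucky le [seq linpoly c | c <- s] p ->
  (\det (seqmx l s))%:~R != 0 :> 'F_p.
Proof.
move=> sz det0 lucky; apply/negP; rewrite -det_map_mx -det_tr => /det0P[v v0 vM].
apply/(negP v0)/eqP/rowP => j; rewrite mxE.
apply: (lucky_common_zero lucky) => [_ /mapP[c _ ->] | k | _ /mapP[c /(nthP 0)[i lt_i <-] ->]].
- exact: linpoly_coef0.
- by exists (\det (seqmx l s)); last exact: in_ideal_det_X.
have lt_il : (i < l)%N by rewrite -sz.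
have := congr1 (fun A : 'rV['F_p]_l => A 0 (Ordinal lt_il)) vM; rewrite !mxE => <-.
by rewrite mevalz_linpoly; apply: eq_bigr => j' _; rewrite !mxE mulrC.
Qed.

End LuckyPrime.

Theorem corollary4p15 (l n : nat) (alpha : 'I_n -> 'rV[int]_l)
  (le : rel 'X_{1..l}) (p : nat) :
  (* each alpha_i is a nonzero integer linear form ... *)
  (forall i, alpha i != 0) ->
  (* ... whose coefficients are not all divisible by any prime *)
  (forall i (q : nat), prime q -> ~~ [forall j, (q%:Z %| alpha i ord0 j)%Z]) ->
  (* the hyperplanes H_i in Q^l are distinct *)
  (forall i j, i != j -> flat (arrQ alpha) [set i] != flat (arrQ alpha) [set j]) ->
  (* essential: the intersection of all H_i is {0} *)
  \rank (flat (arrQ alpha) [set: 'I_n]) = 0%N ->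
  (* sigma is a term ordering *)
  term_order le ->
  prime p ->
  (* p is good *)
  (forall i j : 'I_n, (i < j)%N -> forall c : 'F_p, arrP p alpha i != c *: arrP p alpha j) ->
  (* p is (sigma, l)-lucky *)
  (forall S : {set 'I_n}, #|S| = l -> \rank (flat (arrQ alpha) S) = 0%N ->
     sigma_lucky le [seq linpoly (alpha i) | i <- enum S] p) ->
  charpoly_arr (arrQ alpha) = charpoly_arr (arrP p alpha).
Proof.
move=> _ _ _ essential le_term_order p_prime _ lucky.
apply: charpoly_arr_transfer; apply: eq_rk_of_bases => [|B cB].
  by apply/eqP; rewrite eqn_leq rk_leq -subn_eq0 -mxrank_flat essential.
apply/idP/idP => indepB.
  have luckyB := lucky B cB.
  rewrite mxrank_flat (eqP indepB) cB subnn (map_comp (@linpoly l) alpha) in luckyB.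
  rewrite !indep_det // in indepB *.
  apply: (det_modp_neq0 le_term_order p_prime) (luckyB erefl); first by rewrite size_map -cardE.
  by rewrite -(intr_eq0 rat).
rewrite !indep_det // intr_eq0 in indepB *.
by apply: contraNneq indepB => ->.
Qed.
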